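(* Assume the current syndrome $\sigma$ is non-empty. (i) If $\sigma \subseteq \{v_1\}\times C_2$ for some fixed $v_1\in V_1$ (a horizontal line), then every set $F\in\mathcal F$ with $\mathrm{score}(F)=\max_{F'\in\mathcal F}\mathrm{score}(F')>0$ satisfies $F\subseteq \{v_1\}\times V_2$. (ii) Symmetrically, if $\sigma\subseteq V_1\times\{c_2\}$ for some fixed $c_2\in C_2$ (a vertical line), then every set $F\in\mathcal F$ with $\mathrm{score}(F)=\max_{F'\in\mathcal F}\mathrm{score}(F')>0$ satisfies $F\subseteq C_1\times\{c_2\}$. In other words, the only sets that Small-Set-Flip can flip in this situation lie on the line $\{v_1\}\times V_2$ (resp. $C_1\times\{c_2\}$).
   Context: Let $G=(V\cup C,E)$ be a connected bipartite graph that is $(\Delta_V,\Delta_C)$-biregular (every vertex of $V$ has degree $\Delta_V$, every vertex of $C$ has degree $\Delta_C$), with $\Delta_V,\Delta_C\ge 2$. For a vertex $x$, $\Gamma(x)$ denotes its set of neighbours in $G$. Let $G_1=(V_1\cup C_1,E_1)$ and $G_2=(V_2\cup C_2,E_2)$ be two copies of $G$. The hypergraph product code has qubit set $Q=V_1\times V_2\ \sqcup\ C_1\times C_2$. Its $X$-type checks are indexed by $V_1\times C_2$, the check $(v,c)$ acting on the qubits $\{v\}\times\Gamma(c)\ \sqcup\ \Gamma(v)\times\{c\}$. Its $Z$-type generators are indexed by $C_1\times V_2$, the generator $(c,v)$ having support $\mathrm{supp}(c,v)=\Gamma(c)\times\{v\}\ \sqcup\ \{c\}\times\Gamma(v)$.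 For a set $F\subseteq Q$ (support of a $Z$ error), its syndrome $\sigma(F)\subseteq V_1\times C_2$ is the set of $X$-checks acting on an odd number of qubits of $F$. The current syndrome $\sigma\subseteq V_1\times C_2$ is the set of unsatisfied checks. Let $\mathcal F=\{F: F\subseteq \mathrm{supp}(c,v)\text{ for some }(c,v)\in C_1\times V_2\}$. For $F\neq\emptyset$, $\mathrm{score}(F)=\big(|\sigma|-|\sigma\,\triangle\,\sigma(F)|\big)/|F|$ (here $\triangle$ is symmetric difference, i.e. sum mod 2), and $\mathrm{score}(\emptyset)=0$. The Small-Set-Flip decoder, in each iteration, selects a set $F\in\mathcal F$ maximizing $\mathrm{score}$ and, if that score is positive, flips it (replacing $\sigma$ by $\sigma\triangle\sigma(F)$); otherwise it stops. *)

From mathcomp Require Import all_boot all_order all_algebra.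
Set Implicit Arguments. Unset Strict Implicit. Unset Printing Implicit Defensive.
Import Order.TTheory GRing.Theory Num.Theory.

Section HGP.
Variables (V C : finType) (adj : V -> C -> bool).
(* G = (V u C, E) bipartite, with edge set {(v,c) | adj v c}.
   Both copies G1, G2 are G itself: V1 = V2 = V, C1 = C2 = C. *)

Definition Gv (v : V) : {set C} := [set c | adj v c].
Definition Gc (c : C) : {set V} := [set v | adj v c].

Definition bip_edge : rel (V + C) := fun x y =>
  match x, y with
  | inl v, inr c => adj v c
  | inr c, inl v => adj v c
  | _, _ => false
  end.
Definition bip_connected : Prop := forall x y : V + C, connect bip_edge x y.

(* qubits : V1 x V2 (inl) disjoint-union C1 x C2 (inr) *)
Definition xcheck (x : V * C) : {set (V * V) + (C * C)} :=
  [set q | match q with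
           | inl (a, b) => (a == x.1) && (b \in Gc x.2)
           | inr (c1, c2) => (c1 \in Gv x.1) && (c2 == x.2)
           end].

Definition zsupp (y : C * V) : {set (V * V) + (C * C)} :=
  [set q | match q with
           | inl (a, b) => (a \in Gc y.1) && (b == y.2)
           | inr (c1, c2) => (c1 == y.1) && (c2 \in Gv y.2)
           end].

Definition syndrome (F : {set (V * V) + (C * C)}) : {set V * C} :=
  [set x | odd #|F :&: xcheck x|].

Definition in_family (F : {set (V * V) + (C * C)}) : bool :=
  [exists y : C * V, F \subset zsupp y].

Definition symdiff (T : finType) (A B : {set T}) : {set T} :=
  (A :\: B) :|: (B :\: A).

Local Open Scope ring_scope.
Definition score (sigma : {set V * C}) (F : {set (V * V) + (C * C)}) : rat :=
  if F == set0 then 0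
  else ((#|sigma|%:R - #|symdiff sigma (syndrome F)|%:R) / #|F|%:R).

End HGP.

From mathcomp Require Import all_boot all_order all_algebra.
From mathcomp Require Import zify lra.
Import Order.TTheory GRing.Theory Num.Theory.

Set Implicit Arguments.
Unset Strict Implicit.
Unset Printing Implicit Defensive.

(* Let F lie in the support of the Z-generator (c, v) and let sigma lie on the
   line {v1} x C.  Pick a neighbour u <> v1 of c.  Unless exactly one of the
   qubits (v1, v), (u, v) is in F, the row of v1 in the syndrome of F is
   contained in the row of u, so flipping F does not shrink sigma.  Otherwise
   the two rows cover Gamma(v), hence the syndrome of F has at least |Gamma(v)|
   elements and the single qubit (v1, v) has a gain at least that of F; as the
   score of F is its gain divided by |F|, maximality forces |F| = 1, and a
   syndrome bit of F on the line forces F = {(v1, v)}.  Exchanging V with C and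
   the two factors of the product turns vertical lines into horizontal ones. *)

Lemma card_subset_set2 (T : finType) (S : {set T}) p q : p != q ->
  S \subset [set p; q] -> #|S| = (p \in S) + (q \in S).
Proof.
move=> pq /subsetP Spq; rewrite (cardsD1 p) (cardsD1 q (S :\ p)) !inE eq_sym pq /=.
suff -> : S :\ p :\ q = set0 by rewrite cards0 addn0.
apply/setP => r; rewrite !inE; case: (boolP (r \in S)) => [/Spq|]; last by rewrite !andbF.
by rewrite !inE andbT => /orP[]/eqP->; rewrite eqxx ?andbF.
Qed.

Lemma card_symdiff (T : finType) (A B : {set T}) :
  #|symdiff A B| + 2 * #|A :&: B| = #|A| + #|B|.
Proof.
have -> : symdiff A B = (A :|: B) :\: (A :&: B).
  by apply/setP => x; rewrite !inE; case: (x \in A); case: (x \in B).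
have IsubU : A :&: B \subset A :|: B := subset_trans (subsetIl A B) (subsetUl A B).
rewrite cardsD -cardsUI (setIidPr IsubU); have := subset_leq_card IsubU; lia.
Qed.

Section Rows.
Variables T1 T2 : finType.

Definition row (S : {set T1 * T2}) (x : T1) : {set T2} := [set y | (x, y) \in S].

Lemma mem_row S x y : (y \in row S x) = ((x, y) \in S).
Proof. by rewrite inE. Qed.

Lemma card_setI_row (sigma S : {set T1 * T2}) x :
  sigma \subset [set p | p.1 == x] -> #|sigma :&: S| <= #|row S x|.
Proof.
move=> /subsetP sigma_x; rewrite -[#|row S x|]mul1n -(cards1 x) -cardsX.
apply/subset_leq_card/subsetP => -[x' y]; rewrite !inE => /andP[/[dup] /sigma_x].
by rewrite inE => /eqP/= -> _ ->; rewrite eqxx.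
Qed.

Lemma card_row2 (S : {set T1 * T2}) x1 x2 :
  x1 != x2 -> #|row S x1| + #|row S x2| <= #|S|.
Proof.
move=> x12; pose line x := setX [set x] (row S x).
have card_line x : #|line x| = #|row S x| by rewrite cardsX cards1 mul1n.
rewrite -!card_line -cardsUI.
have -> : line x1 :&: line x2 = set0.
  apply/setP => -[x y]; rewrite !inE.
  by case: eqP => [->|] //=; rewrite (negbTE x12) !andbF.
rewrite cards0 addn0; apply/subset_leq_card/subsetP => -[x y].
by rewrite !inE => /orP[] /andP[/eqP/= ->].
Qed.

End Rows.

Local Open Scope ring_scope.

Definition gain (T : finType) (sigma S : {set T}) : rat :=
  #|sigma|%:R - #|symdiff sigma S|%:R.

Lemma gainE (T : finType) (sigma S : {set T}) :
  gain sigma S = 2 * #|sigma :&: S|%:R - #|S|%:R.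
Proof.
have /(congr1 (fun n => n%:R : rat)) /= := card_symdiff sigma S.
rewrite /gain !natrD addr0 => ?; lra.
Qed.

Lemma gain_imset (T T' : finType) (f : T -> T') (sigma S : {set T}) :
  injective f -> gain (f @: sigma) (f @: S) = gain sigma S.
Proof. by move=> f_inj; rewrite !gainE -imsetI ?card_imset // => x y _ _ /f_inj. Qed.

Lemma gain_gt0_meet (T : finType) (sigma S : {set T}) :
  0 < gain sigma S -> exists x, x \in sigma :&: S.
Proof.
rewrite gainE => gain_gt0; apply/set0Pn; apply: contraTneq gain_gt0 => ->.
by rewrite cards0 mulr0 sub0r -leNgt oppr_le0.
Qed.

Lemma gain_le (T : finType) (sigma S S' : {set T}) :
  sigma :&: S \subset sigma :&: S' -> (#|S'| <= #|S|)%N -> gain sigma S <= gain sigma S'.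
Proof.
move=> /subset_leq_card; rewrite -!(ler_nat rat) !gainE => ? ?; lra.
Qed.

Lemma gain_le0_row_subset (T1 T2 : finType) (sigma S : {set T1 * T2}) x1 x2 :
  sigma \subset [set p | p.1 == x1] -> x1 != x2 -> row S x1 \subset row S x2 ->
  gain sigma S <= 0.
Proof.
move=> /(card_setI_row S) sigma_x1 /(card_row2 S) rows_le /subset_leq_card row_le.
have : (2 * #|sigma :&: S| <= #|S|)%N by lia.
rewrite -(ler_nat rat) natrM gainE => ?; lra.
Qed.

Lemma ltr_div_nat (x : rat) n : (1 < n)%N -> 0 < x -> x / n%:R < x.
Proof.
move=> n_gt1 x_gt0; rewrite ltr_pdivrMr ?ltr_pMr ?ltr1n //.
by rewrite ltr0n; apply: ltn_trans n_gt1.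
Qed.

Section Syndrome.
Variables (V C : finType) (adj : V -> C -> bool).
Local Notation qubit := ((V * V) + (C * C))%type.

Lemma mem_syndrome_zsupp (F : {set qubit}) c v x y :
  F \subset zsupp adj (c, v) ->
  ((x, y) \in syndrome adj F) =
  (inl (x, v) \in F) && adj v y (+) (inr (c, y) \in F) && adj x c.
Proof.
move=> /subsetP F_cv; rewrite inE (@card_subset_set2 _ _ (inl (x, v)) (inr (c, y))) //.
  by rewrite oddD !oddb !inE /= !eqxx andbT.
apply/subsetP => q; rewrite !inE => /andP[/[dup] /F_cv + qF].
case: q {qF} => [[a b]|[c1 c2]]; rewrite !inE /=.
  by move=> /andP[_ /eqP->] /andP[/eqP-> _]; rewrite eqxx.
by move=> /andP[/eqP-> _] /andP[_ /eqP->].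
Qed.

Lemma syndrome_zsupp_adj (F : {set qubit}) c v x y :
  F \subset zsupp adj (c, v) -> (x, y) \in syndrome adj F -> adj v y.
Proof.
move=> /[dup] F_cv /mem_syndrome_zsupp ->.
case: (boolP (inr (c, y) \in F)) => [/(subsetP F_cv)|_]; first by rewrite !inE => /andP[].
by rewrite andFb addbF => /andP[].
Qed.

Lemma syndrome_set1_inl a b :
  syndrome adj [set inl (a, b)] = setX [set a] (Gv adj b).
Proof.
apply/setP => -[x y]; rewrite !inE.
case: (boolP (inl (a, b) \in xcheck adj (x, y))) => q_xy.
  by rewrite (setIidPl _) ?sub1set // cards1; move: q_xy; rewrite !inE eq_sym.
rewrite disjoint_setI0 ?disjoints1 // cards0; move: q_xy; rewrite !inE eq_sym.
by move/negbTE->.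
Qed.

Lemma scoreE sigma (F : {set qubit}) :
  score adj sigma F = if F == set0 then 0 else gain sigma (syndrome adj F) / #|F|%:R.
Proof. by []. Qed.

End Syndrome.

Section HorizontalLine.
Variables (V C : finType) (adj : V -> C -> bool).
Local Notation qubit := ((V * V) + (C * C))%type.
Variables (sigma : {set V * C}) (v1 : V).
Hypothesis sigma_row : sigma \subset [set x | x.1 == v1].

Section ZSupport.
Variables (c : C) (v : V) (F : {set qubit}).
Hypothesis F_cv : F \subset zsupp adj (c, v).
Local Notation S := (syndrome adj F).
Hypothesis gain_gt0 : 0 < gain sigma S.

Lemma rows_differ u : u != v1 -> adj u c ->
  adj v1 c && ((inl (v1, v) \in F) != (inl (u, v) \in F)).
Proof.
move=> u_v1 uc; apply: contraTT gain_gt0 => same; rewrite -leNgt.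
rewrite eq_sym in u_v1; apply: (gain_le0_row_subset sigma_row u_v1).
apply/subsetP => y; rewrite !mem_row !(mem_syndrome_zsupp _ _ F_cv) uc andbT.
case: (boolP (adj v1 c)) same => [v1c /negPn/eqP-> | v1c _]; first by rewrite andbT.
suff /negbTE-> : inl (v1, v) \notin F by rewrite andbF.
by apply: contra v1c => /(subsetP F_cv); rewrite !inE => /andP[].
Qed.

Lemma card_Gv_le_syndrome u : u != v1 -> adj u c -> adj v1 c ->
  (inl (v1, v) \in F) != (inl (u, v) \in F) -> (#|Gv adj v| <= #|S|)%N.
Proof.
move=> u_v1 uc v1c flags; rewrite eq_sym in u_v1.
apply: leq_trans (card_row2 S u_v1); apply: leq_trans (leq_card_setU _ _).
apply/subset_leq_card/subsetP => y; rewrite inE in_setU !mem_row => vy.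
rewrite !(mem_syndrome_zsupp _ _ F_cv) uc v1c vy !andbT.
by move: flags; do 3!case: (_ \in F).
Qed.

Lemma gain_le_gain_set1 : (#|Gv adj v| <= #|S|)%N ->
  gain sigma S <= gain sigma (syndrome adj [set inl (v1, v)]).
Proof.
move=> Gv_le; apply: gain_le; last by rewrite syndrome_set1_inl cardsX cards1 mul1n.
rewrite syndrome_set1_inl; apply/subsetP => -[x y].
move=> /setIP[xy_sigma /(syndrome_zsupp_adj F_cv) vy].
move/(subsetP sigma_row): (xy_sigma); rewrite inE /= => x_v1.
by rewrite !inE x_v1 vy xy_sigma.
Qed.

Hypothesis F_max : forall F', in_family adj F' -> score adj sigma F' <= score adj sigma F.

Lemma card_zsupp_le1 : adj v1 c -> (#|Gv adj v| <= #|S|)%N -> (#|F| <= 1)%N.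
Proof.
move=> v1c Gv_le; rewrite leqNgt; apply/negP => F_gt1.
have F1_family : in_family adj [set inl (v1, v)].
  by apply/existsP; exists (c, v); rewrite sub1set !inE v1c eqxx.
have := F_max F1_family; rewrite !scoreE -!cards_eq0 cards1 divr1.
rewrite (gtn_eqF (ltnW F_gt1)); apply/negP; rewrite -ltNge.
exact: lt_le_trans (ltr_div_nat F_gt1 gain_gt0) (gain_le_gain_set1 Gv_le).
Qed.

Lemma zsupp_flip_sub_row : (1 < #|Gc adj c|)%N ->
  F \subset [set q | if q is inl (a, _) then a == v1 else false].
Proof.
move=> Gc_gt1; have [u u_v1 uc] : exists2 u, u != v1 & adj u c.
  have /card_gt1P[u1 [u2 []]] := Gc_gt1; rewrite !inE => u1c u2c u12.
  by case: (eqVneq u1 v1) => [u1_v1|]; [exists u2; rewrite // -u1_v1 eq_sym | exists u1].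
have /andP[v1c flags] := rows_differ u_v1 uc.
have /card_le1_eqP F_eq := card_zsupp_le1 v1c (card_Gv_le_syndrome u_v1 uc v1c flags).
have [[x y] /setIP[xy_sigma xy_S]] := gain_gt0_meet gain_gt0.
move/(subsetP sigma_row): xy_sigma; rewrite inE /= => /eqP x_v1; subst x.
apply/subsetP => q qF; case: (boolP (inl (v1, v) \in F)) => v1F.
  by rewrite (F_eq _ _ v1F qF) inE.
have uF : inl (u, v) \in F by move: flags; rewrite (negbTE v1F); case: (_ \in F).
have cyF : inr (c, y) \in F.
  by move: xy_S; rewrite (mem_syndrome_zsupp _ _ F_cv) (negbTE v1F) => /andP[].
by have := F_eq _ _ uF cyF.
Qed.

End ZSupport.

Lemma flip_sub_row (F : {set qubit}) :
  (forall c, 1 < #|Gc adj c|)%N -> in_family adj F ->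
  (forall F', in_family adj F' -> (score adj sigma F' <= score adj sigma F)%R) ->
  (0 < score adj sigma F)%R ->
  F \subset [set q | if q is inl (a, _) then a == v1 else false].
Proof.
move=> Gc_gt1 /existsP[[c v] F_cv] F_max; rewrite scoreE.
have [-> | F_ne0] := eqVneq F set0; first by rewrite ltxx.
rewrite pmulr_lgt0 ?invr_gt0 ?ltr0n ?card_gt0 // => gain_gt0.
exact: zsupp_flip_sub_row F_cv gain_gt0 F_max (Gc_gt1 c).
Qed.

End HorizontalLine.

Definition tr_adj (V C : finType) (adj : V -> C -> bool) : C -> V -> bool :=
  fun c v => adj v c.

Definition tr_qubit {V C : finType} (q : (V * V) + (C * C)) : (C * C) + (V * V) :=
  match q with inl (a, b) => inr (b, a) | inr (c1, c2) => inl (c2, c1) end.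

Lemma tr_qubitK (V C : finType) : cancel (@tr_qubit V C) (@tr_qubit C V).
Proof. by case=> -[]. Qed.

Lemma tr_qubit_inj (V C : finType) : injective (@tr_qubit V C).
Proof. exact: can_inj (@tr_qubitK V C). Qed.

Section Transpose.
Variables (V C : finType) (adj : V -> C -> bool).
Local Notation qubit := ((V * V) + (C * C))%type.

Lemma xcheck_tr x : xcheck (tr_adj adj) (swap_pair x) = tr_qubit @: xcheck adj x.
Proof.
rewrite (can2_imset_pre _ (@tr_qubitK V C) (@tr_qubitK C V)).
by apply/setP => -[[a b]|[c1 c2]]; rewrite !inE /tr_adj /= !inE andbC.
Qed.

Lemma zsupp_tr y : zsupp (tr_adj adj) (swap_pair y) = tr_qubit @: zsupp adj y.
Proof.
rewrite (can2_imset_pre _ (@tr_qubitK V C) (@tr_qubitK C V)).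
by apply/setP => -[[a b]|[c1 c2]]; rewrite !inE /tr_adj /= !inE andbC.
Qed.

Lemma syndrome_tr (F : {set qubit}) :
  syndrome (tr_adj adj) (tr_qubit @: F) = swap_pair @: syndrome adj F.
Proof.
apply/setP => -[c v]; rewrite -[(c, v)]/(swap_pair (v, c)).
rewrite (mem_imset _ _ (can_inj swap_pairK)) !inE xcheck_tr -imsetI ?card_imset //.
  exact: tr_qubit_inj.
by move=> ? ? _ _ /tr_qubit_inj.
Qed.

Lemma in_family_tr (F : {set qubit}) :
  in_family adj F -> in_family (tr_adj adj) (tr_qubit @: F).
Proof.
by case/existsP=> y F_y; apply/existsP; exists (swap_pair y); rewrite zsupp_tr imsetS.
Qed.

Lemma score_tr (sigma : {set V * C}) (F : {set qubit}) :
  score (tr_adj adj) (swap_pair @: sigma) (tr_qubit @: F) = score adj sigma F.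
Proof.
rewrite !scoreE imset_eq0 syndrome_tr gain_imset ?card_imset //.
  exact: tr_qubit_inj.
exact: can_inj swap_pairK.
Qed.

End Transpose.

Lemma flip_sub_column (V C : finType) (adj : V -> C -> bool) (sigma : {set V * C}) c2
    (F : {set (V * V) + (C * C)}) :
  (forall v, 1 < #|Gv adj v|)%N -> sigma \subset [set x | x.2 == c2] ->
  in_family adj F ->
  (forall F', in_family adj F' -> (score adj sigma F' <= score adj sigma F)%R) ->
  (0 < score adj sigma F)%R ->
  F \subset [set q | if q is inr (_, b) then b == c2 else false].
Proof.
move=> Gv_gt1 sigma_col F_family F_max score_gt0.
have sigma_tr_row : swap_pair @: sigma \subset [set x | x.1 == c2].
  by apply/subsetP => _ /imsetP[x /(subsetP sigma_col) + ->]; rewrite !inE.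
have F_tr_max F' : in_family (tr_adj adj) F' ->
    (score (tr_adj adj) (swap_pair @: sigma) F' <=
     score (tr_adj adj) (swap_pair @: sigma) (tr_qubit @: F))%R.
  move=> /in_family_tr F'_family; have -> : F' = tr_qubit @: (tr_qubit @: F').
    by rewrite -imset_comp (eq_imset _ (@tr_qubitK _ _)) imset_id.
  by rewrite !score_tr; apply: F_max.
have score_tr_gt0 : (0 < score (tr_adj adj) (swap_pair @: sigma) (tr_qubit @: F))%R.
  by rewrite score_tr.
have /subsetP F_tr_row :=
  flip_sub_row sigma_tr_row Gv_gt1 (in_family_tr F_family) F_tr_max score_tr_gt0.
apply/subsetP => q qF; have := F_tr_row _ (imset_f tr_qubit qF).
by case: q {qF} => -[] a b; rewrite !inE.
Qed.

Theorem lemma1 (V C : finType) (adj : V -> C -> bool) (dV dC : nat)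
  (hdV : (2 <= dV)%N) (hdC : (2 <= dC)%N)
  (hregV : forall v : V, #|Gv adj v| = dV)
  (hregC : forall c : C, #|Gc adj c| = dC)
  (hconn : bip_connected adj)
  (sigma : {set V * C})
  (hsig : exists E : {set (V * V) + (C * C)}, sigma = syndrome adj E)
  (hne : sigma != set0) :
  (forall v1 : V, sigma \subset [set x | x.1 == v1] ->
     forall F : {set (V * V) + (C * C)}, in_family adj F ->
       (forall F', in_family adj F' -> (score adj sigma F' <= score adj sigma F)%R) ->
       (0 < score adj sigma F)%R ->
       F \subset [set q | if q is inl (a, _) then a == v1 else false])
  /\
  (forall c2 : C, sigma \subset [set x | x.2 == c2] ->
     forall F : {set (V * V) + (C * C)}, in_family adj F ->
       (forall F', in_family adj F' -> (score adj sigma F' <= score adj sigma F)%R) ->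
       (0 < score adj sigma F)%R ->
       F \subset [set q | if q is inr (_, b) then b == c2 else false]).
Proof.
have Gc_gt1 c : (1 < #|Gc adj c|)%N by rewrite hregC.
have Gv_gt1 v : (1 < #|Gv adj v|)%N by rewrite hregV.
by split=> [v1 | c2] sigma_line F; [apply: flip_sub_row | apply: flip_sub_column].
Qed.
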